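(* Let $A$ be a linear Nakayama algebra with simple modules $S_0,\dots,S_{n-1}$, Kupisch series $[c_0,\dots,c_{n-1}]$, and let $d_j=\dim_K D(Ae_j)$. For $0\le i\le n-1$, the indecomposable projective module $e_iA$ has injective dimension equal to one if and only if $c_i<d_{i+c_i-1}$ and $d_{i+c_i-1}-c_i=d_{i-1}$ (with the convention $d_{-1}:=0$).
   Context: $K$ is a field; a linear Nakayama algebra with $n$ simple modules is a connected algebra $A=KQ/I$ with $Q$ the quiver $0\to1\to\cdots\to n-1$ and $I$ admissible; modules are finite-dimensional right modules. $e_iA$ is uniserial with composition factors $S_i,\dots,S_{i+c_i-1}$ from top to socle, $c_i=\dim_K e_iA$. $D=\operatorname{Hom}_K(-,K)$ and $D(Ae_j)$ is the injective envelope of $S_j$. *)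

(* Finite-dimensional right modules over a linear Nakayama
   algebra A = KQ/I, Q = 0 -> 1 -> ... -> n-1, presented as representations
   of Q (vertices are natural numbers, dimension 0 outside [0,n)) satisfying
   the relations of I.  Right-module convention: row vectors, v |-> v *m M. *)
From HB Require Import structures.
From mathcomp Require Import all_boot all_order all_algebra.
Set Implicit Arguments. Unset Strict Implicit. Unset Printing Implicit Defensive.
Import GRing.Theory.
Local Open Scope ring_scope.

Record rep (K : fieldType) := Rep {
  dimv : nat -> nat ;
  mapv : forall k : nat, 'M[K]_(dimv k, dimv k.+1) }.

Fixpoint pathmap (K : fieldType) (V : rep K) (i l : nat)
  : 'M[K]_(dimv V i, dimv V (l + i)) :=
  match l return 'M[K]_(dimv V i, dimv V (l + i)) with
  | 0 => 1%:M
  | l'.+1 => pathmap V i l' *m mapv V (l' + i)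
  end.

(* Kupisch series of a connected linear Nakayama algebra with n simples:
   c_{n-1} = 1, c_i >= 2 for i < n-1, c_{i+1} >= c_i - 1.  The admissible
   ideal I is generated by the paths i -> i + c_i (c_i = dim e_i A). *)
Definition kupisch (n : nat) (c : nat -> nat) : Prop :=
  (0 < n)%N /\ c n.-1 = 1%N /\ (forall i, (i < n.-1)%N -> (2 <= c i)%N) /\
  (forall i, (i < n.-1)%N -> (c i <= (c i.+1).+1)%N).

Definition is_module (K : fieldType) (n : nat) (c : nat -> nat) (V : rep K) :=
  (forall k, (n <= k)%N -> dimv V k = 0%N) /\
  (forall i, (i < n)%N -> pathmap V i (c i) = 0).

Definition is_hom (K : fieldType) (V W : rep K)
  (f : forall k, 'M[K]_(dimv V k, dimv W k)) : Prop :=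
  forall k, mapv V k *m f k.+1 = f k *m mapv W k.

Definition injective_mod (K : fieldType) (n : nat) (c : nat -> nat) (E : rep K) :=
  is_module n c E /\
  forall (X Y : rep K) (u : forall k, 'M[K]_(dimv X k, dimv Y k))
         (g : forall k, 'M[K]_(dimv X k, dimv E k)),
    is_module n c X -> is_module n c Y -> is_hom u -> is_hom g ->
    (forall k, row_free (u k)) ->
    exists h : forall k, 'M[K]_(dimv Y k, dimv E k),
      is_hom h /\ forall k, u k *m h k = g k.

Definition inj_coresolution (K : fieldType) (n : nat) (c : nat -> nat)
  (V : rep K) (m : nat) : Prop :=
  exists (I : nat -> rep K)
         (e : forall k, 'M[K]_(dimv V k, dimv (I 0%N) k))
         (d : forall j k, 'M[K]_(dimv (I j) k, dimv (I j.+1) k)),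
    [/\ forall j, (j <= m)%N -> injective_mod n c (I j),
        forall j k, (m < j)%N -> dimv (I j) k = 0%N,
        is_hom e /\ (forall j, is_hom (d j)),
        forall k, row_free (e k) &
        (forall k, (e k == kermx (d 0%N k))%MS) /\
        (forall j k, (d j k == kermx (d j.+1 k))%MS)].

Definition inj_dim_eq (K : fieldType) (n : nat) (c : nat -> nat)
  (V : rep K) (m : nat) : Prop :=
  inj_coresolution n c V m /\
  forall m', (m' < m)%N -> ~ inj_coresolution n c V m'.

(* The indecomposable projective e_i A: composition factors S_i..S_{i+c_i-1}
   (one-dimensional at those vertices, identity maps between them). *)
Definition projP (K : fieldType) (n : nat) (c : nat -> nat) (i : nat) : rep K :=
  @Rep K (fun k => ((i <= k)%N && (k < i + c i)%N && (k < n)%N : nat))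
         (fun k => const_mx 1).

(* D(A e_j): e_k A e_j is nonzero iff k <= j < k + c_k (path k -> j nonzero). *)
Definition injI (K : fieldType) (n : nat) (c : nat -> nat) (j : nat) : rep K :=
  @Rep K (fun k => ((k <= j)%N && (j < k + c k)%N && (k < n)%N : nat))
         (fun k => const_mx 1).

Definition dimD (K : fieldType) (n : nat) (c : nat -> nat) (j : nat) : nat :=
  (\sum_(k < n) dimv (injI K n c j) k)%N.

Definition dimD_pred (K : fieldType) (n : nat) (c : nat -> nat) (i : nat) : nat :=
  if i is i'.+1 then dimD K n c i' else 0%N.

(* Every module involved is an interval module.  The projective e_iA is [i, j] with
   j = i + c_i - 1, and D(Ae_j) = [a, j] where a is the least vertex whose projective reaches
   j, so d_j = j + 1 - a and the two conditions say a < i and D(Ae_{i-1}) = [a, i - 1].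
   If a = i, e_iA = D(Ae_j) is injective.  If a < i, e_iA is a proper submodule of D(Ae_j)
   containing its socle, so it is not injective, and the cokernel of e_iA -> D(Ae_j) is
   [a, i - 1]; when that is D(Ae_{i-1}) we get a coresolution of length one.  Conversely, let
   0 -> e_iA -> I_0 -> I_1 -> 0 be an injective coresolution and D(Ae_{i-1}) = [a', i - 1]
   with a' < a.  Extend e_iA -> I_0 to psi : D(Ae_j) -> I_0; composed with I_0 -> I_1 it
   factors through [a, i - 1], extends to [a - 1, i - 1] -> I_1 by injectivity of I_1, and
   its top lifts to an element of (I_0)_{a-1}.  Walking that element to the vertex j gives
   psi of the socle of D(Ae_j), which is nonzero, although (a - 1) + c_{a-1} <= j forces the
   path to vanish. *)

From mathcomp Require Import all_boot all_order all_algebra zify.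

Set Implicit Arguments. Unset Strict Implicit. Unset Printing Implicit Defensive.
Import GRing.Theory.
Local Open Scope ring_scope.

Section AllOnesMatrices.
Variable K : fieldType.

Lemma empty_mx_eq m p (A B : 'M[K]_(m, p)) : (m = 0 \/ p = 0)%N -> A = B.
Proof.
case=> E; move: A B; rewrite E => A B.
  by rewrite (flatmx0 A) (flatmx0 B).
by rewrite (thinmx0 A) (thinmx0 B).
Qed.

Lemma mul_const1 m p q :
  (const_mx 1 : 'M[K]_(m, p)) *m (const_mx 1 : 'M[K]_(p, q)) = const_mx p%:R.
Proof.
apply/matrixP => i j; rewrite !mxE (eq_bigr (fun _ => 1)) ?sumr_const ?card_ord //.
by move=> k _; rewrite !mxE mulr1.
Qed.

Lemma mul_const1_id m p q : p = 1%N ->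
  (const_mx 1 : 'M[K]_(m, p)) *m (const_mx 1 : 'M[K]_(p, q)) = const_mx 1.
Proof. by move=> p1; rewrite mul_const1 p1. Qed.

Lemma mul_const1_0 m p q : p = 0%N ->
  (const_mx 1 : 'M[K]_(m, p)) *m (const_mx 1 : 'M[K]_(p, q)) = 0.
Proof. by move=> p0; rewrite mul_const1 p0; apply/matrixP => i j; rewrite !mxE. Qed.

Lemma const1_scalar p : p = 1%N -> (const_mx 1 : 'M[K]_p) = 1%:M.
Proof. by move=> ->; apply/matrixP => i j; rewrite !mxE !ord1. Qed.

Lemma const1_neq0 m p : m = 1%N -> p = 1%N -> (const_mx 1 : 'M[K]_(m, p)) != 0.
Proof.
move=> -> ->; apply/eqP => /matrixP /(_ ord0 ord0) /eqP.
by rewrite !mxE oner_eq0.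
Qed.

Lemma mxrank_const1 p q : (p <= 1)%N -> (q <= 1)%N ->
  \rank (const_mx 1 : 'M[K]_(p, q)) = (p * q)%N.
Proof.
case: p => [|[|//]] _ q1; first by apply/eqP; rewrite mul0n -leqn0 rank_leq_row.
case: q q1 => [|[|//]] _; first by apply/eqP; rewrite muln0 -leqn0 rank_leq_col.
by rewrite const1_scalar // mxrank1.
Qed.

Lemma row_free_const1 p q : (p = 0 \/ p = 1 /\ q = 1)%N ->
  row_free (const_mx 1 : 'M[K]_(p, q)).
Proof.
case=> [->|[-> ->]]; first by rewrite /row_free -leqn0 rank_leq_row.
by rewrite const1_scalar // row_free_unit unitmx1.
Qed.

Lemma row_free_neq0 p q (A : 'M[K]_(p, q)) : p = 1%N -> row_free A -> A != 0.
Proof. by move=> p1; apply: contraL => /eqP ->; rewrite /row_free mxrank0 p1. Qed.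

Lemma eqmx_kermx_rank p m q (B : 'M[K]_(p, m)) (A : 'M[K]_(m, q)) :
  B *m A = 0 -> (\rank B + \rank A)%N = m -> (B == kermx A)%MS.
Proof.
move=> BA rkBA; have /mxrank_leqif_eq[_ <-] : (B <= kermx A)%MS by apply/sub_kermxP.
by rewrite mxrank_ker; apply/eqP; lia.
Qed.

Lemma submx_flatmx0 p m q (D : 'M[K]_(m, q)) (B : 'M[K]_(p, q)) :
  p = 0%N -> (D <= B)%MS -> D = 0.
Proof.
move=> p0 /mxrankS rkD; apply/eqP; rewrite -mxrank_eq0 -leqn0.
by apply: leq_trans rkD _; rewrite -p0 rank_leq_row.
Qed.

Lemma row_full_kermx_thinmx m q (A : 'M[K]_(m, q)) : q = 0%N -> row_full (kermx A).
Proof.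
by move=> q0; rewrite /row_full mxrank_ker; have := rank_leq_col A => rkA; apply/eqP; lia.
Qed.

Lemma mul_const1_eq0 p m r (B : 'M[K]_(m, r)) : p = 1%N -> m = 1%N ->
  (const_mx 1 : 'M[K]_(p, m)) *m B = 0 -> B = 0.
Proof. by move=> -> m1; move: B; rewrite m1 => B; rewrite const1_scalar // mul1mx. Qed.

Lemma eqmx_kermx_mul0 p m r (A : 'M[K]_(p, m)) (B : 'M[K]_(m, r)) :
  (A == kermx B)%MS -> A *m B = 0.
Proof. by case/andP=> /sub_kermxP. Qed.

End AllOnesMatrices.

Section Representations.
Variable K : fieldType.
Implicit Types V W : rep K.

Lemma pathmap_addl0 V i l m : pathmap V i l = 0 -> pathmap V i (m + l) = 0.
Proof. by move=> Vil0; elim: m => [|m IHm] //=; rewrite IHm mul0mx. Qed.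

Lemma pathmap_module0 n c V k l :
  is_module n c V -> (k < n)%N -> (c k <= l)%N -> pathmap V k l = 0.
Proof. by move=> [_ relV] kn ckl; rewrite -(subnK ckl) pathmap_addl0 ?relV. Qed.

Lemma pathmap_hom V W f : @is_hom K V W f ->
  forall k l, pathmap V k l *m f (l + k)%N = f k *m pathmap W k l.
Proof.
move=> homf k; elim=> [|l IHl] /=; first by rewrite mul1mx mulmx1.
by rewrite -mulmxA homf mulmxA IHl mulmxA.
Qed.

(* [t + k.+1] and [t.+1 + k] are not convertible, hence the common right factor [F]. *)
Lemma mapv_pathmap V r t k (F : forall m, 'M[K]_(dimv V m, r)) :
  mapv V k *m pathmap V k.+1 t *m F (t + k.+1)%N = pathmap V k t.+1 *m F (t.+1 + k)%N.
Proof.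
elim: t F => [|t IHt] F /=; first by rewrite mulmx1 mul1mx.
by have /= := IHt (fun m => mapv V m *m F m.+1); rewrite !mulmxA => ->.
Qed.

Definition zero_rep : rep K := @Rep K (fun _ => 0%N) (fun _ => 0).

Lemma injective_coresolution0 n c V : injective_mod n c V -> inj_coresolution n c V 0.
Proof.
move=> injV; exists (fun m => if m is 0 then V else zero_rep).
exists (fun k => 1%:M), (fun m k => 0); split.
- by case.
- by case.
- by split=> [k|m k]; rewrite ?mulmx1 ?mul1mx ?mulmx0 ?mul0mx.
- by move=> k; rewrite row_free_unit unitmx1.
- split=> [k|m k]; apply: eqmx_kermx_rank; rewrite ?mulmx0 // ?mxrank1 !mxrank0 ?addn0 //.
Qed.

(* [projP] and [injI] are of this form; the all-ones matrix on an arrow is the identity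
   between two vertices of [P] and an empty matrix otherwise. *)
Definition supp_rep (P : nat -> bool) : rep K :=
  @Rep K (fun k => (P k : nat)) (fun k => const_mx 1).

Lemma pathmap_supp_rep (P : nat -> bool) k l :
  (forall m, (k <= m <= l + k)%N -> P m) -> pathmap (supp_rep P) k l = const_mx 1.
Proof.
elim: l => [|l IHl] Pkl /=; first by rewrite const1_scalar //= Pkl ?leqnn.
rewrite IHl => [|m /andP[km ml]]; last by apply: Pkl; rewrite km; lia.
by rewrite mul_const1_id //= Pkl //; apply/andP; split; lia.
Qed.

Lemma supp_rep_hom (A B : nat -> bool) :
  (forall k, A k -> B k.+1 -> A k.+1 = B k) ->
  @is_hom K (supp_rep A) (supp_rep B) (fun k => const_mx 1).
Proof.
move=> AB k /=; rewrite !mul_const1.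
case Ak: (A k); last by apply: empty_mx_eq; left.
case Bk: (B k.+1); last by apply: empty_mx_eq; right.
by rewrite (AB k Ak Bk).
Qed.

Lemma row_free_supp_rep (A B : nat -> bool) : (forall k, A k -> B k) ->
  forall k, row_free (const_mx 1 : 'M[K]_(A k : nat, B k : nat)).
Proof.
move=> AB k; apply: row_free_const1.
by case Ak: (A k); [right; rewrite AB | left].
Qed.

End Representations.

Section KupischSeries.
Variables (n : nat) (c : nat -> nat).

(* [a] is the top of the injective hull D(Ae_j) = [a, j] of S_j: the projectives e_kA,
   k <= j, that reach the vertex j are exactly those with a <= k. *)
Definition injI_top (j a : nat) : Prop :=
  forall k, (k <= j)%N -> (j < k + c k)%N = (a <= k)%N.

Lemma injI_top_le i j a a' : (i <= j)%N -> (a <= j)%N -> (a' <= i)%N ->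
  injI_top i a' -> injI_top j a -> (a' <= a)%N.
Proof.
move=> ij aj a'i topi topj; case: (leqP a i) => [ai|]; last lia.
by rewrite -topi //; have := topj a aj; rewrite leqnn; lia.
Qed.

Lemma injI_support j a : (j < n)%N -> injI_top j a ->
  forall k, ((k <= j) && (j < k + c k) && (k < n))%N = (a <= k <= j)%N.
Proof.
move=> jn topj k; case: (leqP k j) => kj /=; last by rewrite andbF.
by rewrite topj // andbT; lia.
Qed.

Lemma sum_interval_indicator a b m :
  (\sum_(k < m) ((a <= k) && (k <= b) : nat))%N = (minn m b.+1 - a)%N.
Proof.
elim: m => [|m IHm]; first by rewrite big_ord0; lia.
by rewrite big_ord_recr /= IHm; case: (leqP a m); case: (leqP m b) => /=; lia.
Qed.

Lemma dimD_top (K : fieldType) j a : (j < n)%N -> injI_top j a ->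
  dimD K n c j = (j.+1 - a)%N.
Proof.
move=> jn topj; rewrite /dimD (eq_bigr (fun k : 'I_n => ((a <= k) && (k <= j))%N : nat)).
  by rewrite sum_interval_indicator; lia.
by move=> k _ /=; rewrite (injI_support jn topj).
Qed.

Section Intervals.
Variables (K : fieldType) (P : nat -> bool) (s t : nat).
Hypotheses (P_int : forall k, P k = (s <= k <= t)%N) (tn : (t < n)%N).

Lemma interval_module a : injI_top t a -> (a <= s)%N -> is_module n c (supp_rep K P).
Proof.
move=> topt a_le_s; split=> [k nk|k kn]; first by rewrite /= P_int; lia.
apply: empty_mx_eq; case Pk: (P k); [right | left]; rewrite /= ?Pk //.
have := topt k; move: Pk; rewrite !P_int => /andP[sk kt] /(_ kt).
by rewrite (leq_trans a_le_s sk) => tk; lia.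
Qed.

(* A map into D(Ae_t) is determined by its component at the socle vertex t, and there any
   functional on X_t extends to Y_t along the injective u_t. *)
Lemma interval_injective : (s <= t)%N -> injI_top t s -> injective_mod n c (supp_rep K P).
Proof.
move=> st tops; split=> [|X Y u g _ modY homu homg freeu]; first exact: (interval_module tops).
pose z m : 'M[K]_(dimv Y m, 1) := pinvmx (u m) *m (g m *m const_mx 1).
have uz m : u m *m z m = g m *m const_mx 1 by rewrite /z mulmxA mulmxVp // mul1mx.
clearbody z.
exists (fun k => pathmap Y k (t - k) *m z (t - k + k)%N *m const_mx 1); split=> k.
- case: (boolP (P k.+1)) => Pk1; last by apply: empty_mx_eq; right; rewrite /= (negbTE Pk1).
  have kt : (k < t)%N by move: Pk1; rewrite P_int; lia.
  have tk : (t - k.+1).+1 = (t - k)%N by lia.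
  case: (boolP (P k)) => Pk; rewrite !mulmxA mapv_pathmap -[RHS]mulmxA [mapv (supp_rep K P) k]/=.
  + by rewrite mul_const1_id ?tk //= Pk.
  + have sk : s = k.+1 by move: Pk Pk1; rewrite !P_int; lia.
    rewrite mul_const1_0 => [|/=]; last by rewrite (negbTE Pk).
    rewrite mulmx0 (pathmap_module0 modY) ?mul0mx //; first lia.
    by have := tops k; rewrite sk ltnn => /(_ ltac:(lia)) ?; lia.
- case: (boolP (P k)) => Pk; last by apply: empty_mx_eq; right; rewrite /= (negbTE Pk).
  have skt : (s <= k <= t)%N by rewrite -P_int.
  rewrite !mulmxA -pathmap_hom // -(mulmxA (pathmap X k _)) uz mulmxA pathmap_hom //.
  rewrite pathmap_supp_rep => [|m km]; last by rewrite P_int; lia.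
  rewrite -(mulmxA (g k)) mul_const1_id /= ?P_int; last by apply/eqP; rewrite eqb1; lia.
  by rewrite -mulmxA mul_const1_id /= ?Pk // const1_scalar /= ?Pk // mulmx1.
Qed.

End Intervals.

Hypothesis kup : kupisch n c.

Lemma kupisch_c_gt0 k : (k < n)%N -> (0 < c k)%N.
Proof.
case: kup => [n0 [cn [c2 _]]] kn; case: (ltnP k n.-1) => [/c2 ck2|kn1]; first lia.
have -> : k = n.-1 by lia.
by rewrite cn.
Qed.

Lemma kupisch_reach_mono k1 k2 : (k1 <= k2)%N -> (k2 < n)%N -> (k1 + c k1 <= k2 + c k2)%N.
Proof.
elim: k2 => [|k2 IHk2] k12 k2n; first by have -> : k1 = 0%N by lia.
case: (ltnP k1 k2.+1) => k12'; last by have -> : k1 = k2.+1 by lia.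
have := IHk2 ltac:(lia) ltac:(lia); case: kup => [_ [_ [_ cS]]].
by have := cS k2 ltac:(lia); lia.
Qed.

Lemma kupisch_reach_le k : (k < n)%N -> (k + c k <= n)%N.
Proof.
move=> kn; have := kupisch_reach_mono (k1 := k) (k2 := n.-1) ltac:(lia) ltac:(lia).
by case: kup => [n0 [-> _]]; lia.
Qed.

Lemma injI_top_exists j : (j < n)%N -> exists2 a, (a <= j)%N & injI_top j a.
Proof.
move=> jn; have cj := kupisch_c_gt0 jn.
have ex : exists k, (j < k + c k)%N by exists j; lia.
case: (ex_minnP ex) => a ja amin; exists a; first by apply: amin; lia.
move=> k kj; apply/idP/idP => [/amin //|ak].
by have := kupisch_reach_mono ak ltac:(lia); lia.
Qed.

Lemma projP_support i : (i < n)%N ->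
  forall k, ((i <= k) && (k < i + c i) && (k < n))%N = (i <= k <= i + c i - 1)%N.
Proof. by move=> iN k; have := kupisch_c_gt0 iN; have := kupisch_reach_le iN; lia. Qed.

End KupischSeries.

Section CosyzygyChase.
Variables (K : fieldType) (n : nat) (c : nat -> nat) (P : nat -> bool) (q i j : nat).
Hypotheses (P_int : forall k, P k = (i < k <= j)%N) (qi : (q < i)%N) (ij : (i < j)%N).

(* With a = q + 1: [hull] is D(Ae_j) = [a, j], [coker] = [a, i] is the cokernel of
   (i, j] -> [a, j], and [coker_ext] = [a - 1, i]. *)
Local Notation hull := (fun k => (q < k <= j)%N).
Local Notation coker := (fun k => (q < k <= i)%N).
Local Notation coker_ext := (fun k => (q <= k <= i)%N).

Variables (I0 I1 : rep K) (e : forall k, 'M[K]_(dimv (supp_rep K P) k, dimv I0 k)).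
Variable d : forall k, 'M[K]_(dimv I0 k, dimv I1 k).
Hypotheses (homd : is_hom d) (exact_e : forall k, (e k == kermx (d k))%MS).
Variable psi : forall k, 'M[K]_(dimv (supp_rep K hull) k, dimv I0 k).
Hypotheses (hompsi : is_hom psi) (psi_e : forall k, const_mx 1 *m psi k = e k).

Definition coker_map k : 'M[K]_(dimv (supp_rep K coker) k, dimv I1 k) :=
  const_mx 1 *m psi k *m d k.

Lemma coker_map_hom : is_hom coker_map.
Proof.
move=> k; rewrite /coker_map -!mulmxA -homd (mulmxA (psi k)) -hompsi !mulmxA.
case: (boolP (coker k)) => Xk; last by apply: empty_mx_eq; left; rewrite /= (negbTE Xk).
rewrite [mapv (supp_rep K _) k]/= [in RHS]mul_const1_id /=; last by move: Xk; lia.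
case: (boolP (coker k.+1)) => Xk1; first by rewrite mul_const1_id //= Xk1.
have -> : k = i by move: Xk Xk1; lia.
rewrite mul_const1_0 /= ?(negbTE Xk1) // !mul0mx -!mulmxA.
suff -> : psi i.+1 *m d i.+1 = 0 by rewrite mulmx0.
apply: (@mul_const1_eq0 _ (dimv (supp_rep K P) i.+1)).
- by rewrite /= P_int; lia.
- by rewrite /=; lia.
- by rewrite mulmxA psi_e eqmx_kermx_mul0.
Qed.

Lemma coker_lift_top theta : is_hom theta ->
  (forall k, (const_mx 1 : 'M_(dimv (supp_rep K coker) k, dimv (supp_rep K coker_ext) k))
     *m theta k = coker_map k) ->
  row_full (d q) ->
  exists T : 'M[K]_(dimv (supp_rep K coker_ext) q, dimv I0 q),
    T *m mapv I0 q = const_mx 1 *m psi q.+1.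
Proof.
move=> homtheta theta_ext fullq.
pose T := theta q *m pinvmx (d q).
have TD : T *m d q = theta q by rewrite /T mulmxKpV // submx_full.
exists T; apply/eqP; rewrite -subr_eq0; apply/eqP.
set D := (T *m _ - _).
have DD : D *m d q.+1 = 0.
  rewrite /D mulmxBl -(mulmxA T) homd mulmxA TD -homtheta /=.
  rewrite -(@mul_const1_id K _ (dimv (supp_rep K coker) q.+1)) /=; last lia.
  by rewrite -mulmxA theta_ext /coker_map !mulmxA mul_const1_id ?subrr //=; lia.
(* [D] lies in ker d = im e, which is zero at the vertex q + 1 <= i. *)
apply: (@submx_flatmx0 _ _ _ _ _ (e q.+1)); first by rewrite /= P_int; lia.
have /andP[_ ker_e] := exact_e q.+1.
by apply: submx_trans ker_e; apply/sub_kermxP.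
Qed.

Hypotheses (modI0 : is_module n c I0) (freee : forall k, row_free (e k)).
Hypotheses (jn : (j < n)%N) (reach_q : (q + c q <= j)%N).

(* Walking [Tmap] from q + 1 to j gives psi at the socle j, which is nonzero since e_j is;
   but the path q -> j has length j - q >= c_q. *)
Lemma coker_no_lift_top (T : 'M[K]_(dimv (supp_rep K coker_ext) q, dimv I0 q)) :
  T *m mapv I0 q = const_mx 1 *m psi q.+1 -> False.
Proof.
move=> Tmap; have [t jt] : exists t, j = (t + q.+1)%N by exists (j - q.+1)%N; lia.
pose w m := pinvmx (e m) *m (const_mx 1 : 'M[K]_(dimv (supp_rep K P) m, 1)).
have ew m : e m *m w m = const_mx 1 by rewrite mulmxA mulmxVp // mul1mx.
clearbody w.
have path0 : pathmap I0 q t.+1 = 0 by apply: (pathmap_module0 modI0); lia.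
have := mapv_pathmap t q w; rewrite path0 mul0mx => /(congr1 (mulmx T)).
rewrite mulmx0 !mulmxA Tmap -(mulmxA _ (psi q.+1)) -(pathmap_hom hompsi).
rewrite mulmxA pathmap_supp_rep => [|m qm]; last lia.
rewrite mul_const1_id /=; last lia.
rewrite -mulmxA => /mul_const1_eq0 psiw.
have := ew (t + q.+1); rewrite -psi_e -mulmxA psiw ?mulmx0; [move=> e0 | lia | lia].
have P1 : dimv (supp_rep K P) (t + q.+1) = 1%N by rewrite /= P_int; lia.
by have := @const1_neq0 K _ 1 P1 erefl; rewrite -e0 eqxx.
Qed.

End CosyzygyChase.

Section IntervalCoresolutions.
Variables (K : fieldType) (n : nat) (c : nat -> nat) (P : nat -> bool) (i j : nat).
Hypotheses (P_int : forall k, P k = (i < k <= j)%N) (ij : (i < j)%N) (jn : (j < n)%N).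

Lemma interval_coresolution1 a : (a <= i)%N -> injI_top c j a -> injI_top c i a ->
  inj_coresolution n c (supp_rep K P) 1.
Proof.
move=> ai topj topi.
pose I m := match m with
  | 0 => supp_rep K (fun k => a <= k <= j)%N
  | 1 => supp_rep K (fun k => a <= k <= i)%N
  | _ => zero_rep K end.
pose d m k := match m as m0 return 'M[K]_(dimv (I m0) k, dimv (I m0.+1) k) with
  | 0 => const_mx 1 | _ => 0 end.
exists I, (fun k => const_mx 1), d; split.
- case=> [|[|//]] _; apply: interval_injective => //; lia.
- by case=> [|[|m]].
- split=> [|[|m] k]; rewrite ?mulmx0 ?mul0mx //; apply: supp_rep_hom => l; rewrite ?P_int; lia.
- by apply: row_free_supp_rep => k; rewrite P_int; lia.
- split=> [k|[|[|m]] k]; apply: eqmx_kermx_rank; rewrite ?mulmx0 ?mxrank0 //=.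
  + by rewrite mul_const1; apply: empty_mx_eq; rewrite /= P_int; lia.
  + by rewrite !mxrank_const1 ?leq_b1 //= P_int; lia.
  + by rewrite mxrank_const1 ?leq_b1 //; lia.
Qed.

Section Hull.
Variable a : nat.
Hypotheses (ai : (a <= i)%N) (topj : injI_top c j a).

Local Notation hull := (fun k => (a <= k <= j)%N).

Lemma hull_module : is_module n c (supp_rep K hull).
Proof. exact: (interval_module K (P := hull) (fun _ => erefl) jn topj (leqnn a)). Qed.

Lemma interval_module_in_hull : is_module n c (supp_rep K P).
Proof. by apply: (interval_module K (s := i.+1) P_int jn topj); lia. Qed.

Lemma interval_incl_hull_hom :
  @is_hom K (supp_rep K P) (supp_rep K hull) (fun k => const_mx 1).
Proof. by apply: supp_rep_hom => k; rewrite !P_int; lia. Qed.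

Lemma row_free_interval_incl_hull k :
  row_free (const_mx 1 : 'M[K]_(dimv (supp_rep K P) k, dimv (supp_rep K hull) k)).
Proof. by apply: row_free_supp_rep => l; rewrite P_int; lia. Qed.

(* An injective I_0 receiving (i, j] would be zero at the vertex i by exactness, so the
   extension of (i, j] -> I_0 to the hull [a, j] would kill the arrow i -> i + 1. *)
Lemma interval_no_coresolution0 : ~ inj_coresolution n c (supp_rep K P) 0.
Proof.
move=> [I [e [d [injI zeroI [home _] freee [exact0 _]]]]].
have [_ injI0] := injI 0%N isT.
have [h [homh he]] := injI0 _ _ _ e interval_module_in_hull hull_module
  interval_incl_hull_hom home row_free_interval_incl_hull.
have I0i : dimv (I 0%N) i = 0%N.
  have := eqmx_rank (exact0 i); rewrite mxrank_ker.
  have := rank_leq_col (d 0%N i); have := zeroI 1%N i isT; have := rank_leq_row (e i).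
  have : dimv (supp_rep K P) i = 0%N by rewrite /= P_int; lia.
  lia.
have hi1 : h i.+1 = 0.
  apply: (@mul_const1_eq0 _ (dimv (supp_rep K hull) i)); rewrite /=; try lia.
  by have := homh i; rewrite (empty_mx_eq (h i) 0 (or_intror I0i)) mul0mx.
have P1 : dimv (supp_rep K P) i.+1 = 1%N by rewrite /= P_int; lia.
by have := row_free_neq0 P1 (freee i.+1); rewrite -he hi1 mulmx0 eqxx.
Qed.

End Hull.

Lemma interval_no_coresolution1 q a : (q < i)%N -> injI_top c j q.+1 ->
  injI_top c i a -> (a <= q)%N -> ~ inj_coresolution n c (supp_rep K P) 1.
Proof.
move=> qi topj topi aq [I [e [d [injI zeroI [home homd] freee [exact0 exact]]]]].
have [modI0 injI0] := injI 0%N isT; have [_ injI1] := injI 1%N isT.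
have [psi [hompsi psi_e]] := injI0 _ _ _ e (interval_module_in_hull qi topj)
  (hull_module topj) (interval_incl_hull_hom qi) home (row_free_interval_incl_hull qi).
pose X k := (q < k <= i)%N; pose Y k := (q <= k <= i)%N.
have modX : is_module n c (supp_rep K X).
  by apply: (interval_module K (fun _ => erefl) _ topi); lia.
have modY : is_module n c (supp_rep K Y).
  by apply: (interval_module K (fun _ => erefl) _ topi); lia.
have homXY : @is_hom K (supp_rep K X) (supp_rep K Y) (fun k => const_mx 1).
  by apply: supp_rep_hom => k; rewrite /X /Y; lia.
have freeXY : forall k, row_free (const_mx 1 : 'M[K]_(X k : nat, Y k : nat)).
  by apply: row_free_supp_rep => k; rewrite /X /Y; lia.
have [theta [homtheta theta_ext]] := injI1 _ _ _ _ modX modY homXY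
  (coker_map_hom P_int qi ij (homd 0%N) exact0 hompsi psi_e) freeXY.
have fullq : row_full (d 0%N q).
  by rewrite /row_full (eqmx_rank (exact 0%N q)); apply: row_full_kermx_thinmx; exact: zeroI.
have [T Tmap] := coker_lift_top P_int qi ij (homd 0%N) exact0 homtheta theta_ext fullq.
apply: (coker_no_lift_top P_int qi ij hompsi psi_e modI0 freee jn _ Tmap).
by have := topj q ltac:(lia); rewrite ltnn; lia.
Qed.

End IntervalCoresolutions.

Local Close Scope ring_scope.
Unset Implicit Arguments.

Theorem mainTheorem6 (K : fieldType) (n : nat) (c : nat -> nat) :
  kupisch n c ->
  forall i : nat, (i < n)%N ->
  (inj_dim_eq n c (projP K n c i) 1 <->
   ((c i < dimD K n c (i + c i - 1))%N /\
    (dimD K n c (i + c i - 1) - c i)%N = dimD_pred K n c i)).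
Proof.
move=> kup i iN; have ci := kupisch_c_gt0 kup iN.
have jn : (i + c i - 1 < n)%N by have := kupisch_reach_le kup iN; lia.
have [a aj topj] := injI_top_exists kup jn; rewrite (dimD_top K jn topj).
have ai : (a <= i)%N by rewrite -topj; lia.
have P_int := projP_support kup iN.
case: (ltnP a i) => [a_lt_i | ia]; last first.
  have ea : a = i by lia.
  subst a; split=> [[_ /(_ 0%N isT)[]] | ]; last lia.
  by apply/injective_coresolution0/(interval_injective K P_int) => //; lia.
have [i' ei] : exists i', i = i'.+1 by exists i.-1; lia.
subst i; have [a' a'i topi] := injI_top_exists kup (ltnW iN).
rewrite /= (dimD_top K (ltnW iN) topi).
have a'a : (a' <= a)%N by apply: (injI_top_le _ aj a'i topi topj); lia.
split=> [[core1 _] | [_ da]].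
  case: (ltnP a' a) => [a'_lt_a | a_le_a']; last lia.
  have [q ea] : exists q, a = q.+1 by exists a.-1; lia.
  by subst a; case: (interval_no_coresolution1 P_int _ jn _ topj topi _ core1); lia.
have ea' : a' = a by lia.
subst a'; split; first by apply: (interval_coresolution1 K P_int _ jn _ topj topi); lia.
by case=> // _; apply: (interval_no_coresolution0 P_int) topj; lia.
Qed.
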